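(* Let $d\ge 1$ and $s\in(0,1/2)$. For all real numbers $r_0,r_1$, \[ (r_1^2 - r_1 r_0)\,\widetilde G_s(r_0) \;\ge\; F_s(r_1)-F_s(r_0). \]
   Context: For $\rho\in\mathbb{R}$ define $F_s(\rho) := \int_0^\rho \frac{\rho-r}{(1+r^2)^{(d+1+2s)/2}}\,dr$, $G_s(\rho) := \int_0^\rho (1+r^2)^{-(d+1+2s)/2}\,dr$ (so $G_s=F_s'$), and $\widetilde G_s(\rho) := \int_0^1 (1+\rho^2 r^2)^{-(d+1+2s)/2}\,dr$, so that $\rho\,\widetilde G_s(\rho)=G_s(\rho)$. *)

From Stdlib Require Import Reals.
From Coquelicot Require Import Coquelicot.
Open Scope R_scope.

Definition expo (d : nat) (s : R) : R := (INR d + 1 + 2 * s) / 2.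

(* weight  (1+x^2)^(-(d+1+2s)/2), base is positive so Rpower is the usual power *)
Definition wgt (d : nat) (s : R) (x : R) : R := Rpower (1 + x ^ 2) (- expo d s).

Definition F_s (d : nat) (s rho : R) : R :=
  RInt (fun r => (rho - r) * wgt d s r) 0 rho.

Definition G_s (d : nat) (s rho : R) : R := RInt (fun r => wgt d s r) 0 rho.

Definition Gt_s (d : nat) (s rho : R) : R :=
  RInt (fun r => Rpower (1 + rho ^ 2 * r ^ 2) (- expo d s)) 0 1.

(* Write g := Gt_s(r0) and consider k(x) := g x^2 - g r0 x - F_s(x).  Since
   k(r1) - k(r0) is exactly the difference of the two sides of the inequality,
   it suffices to show that k attains its minimum at r0.  As F_s' = G_s and
   G_s(x) = x Gt_s(x), the derivative is k'(x) = g (2x - r0) - x Gt_s(x), and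
   k' has the sign of x - r0 thanks to three elementary properties of the
   averaged weight Gt_s (valid because the exponent (d+1+2s)/2 is >= 0):
     - Gt_s >= 0;
     - Gt_s(x) is nonincreasing in x^2 (its integrand is);
     - |x| Gt_s(x) = G_s(|x|) is nondecreasing in x^2 (the weight is positive). *)

From Stdlib Require Import Reals Lra Psatz.
From Coquelicot Require Import Coquelicot.
Open Scope R_scope.

Lemma le_of_derivative_sign (f f' : R -> R) (a b : R) :
  (forall x, is_derive f x (f' x)) ->
  (forall x, 0 <= (x - a) * f' x) ->
  f a <= f b.
Proof.
intros Hder Hsign.
assert (Hlim : forall x, derivable_pt_lim f x (f' x))
  by (intro x; apply is_derive_Reals, Hder).
destruct (Rtotal_order a b) as [Hab | [<- | Hba]].
- destruct (MVT_cor2 f f' a b Hab (fun c _ => Hlim c)) as [c [Hmvt Hc]].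
  specialize (Hsign c).
  assert (0 <= f' c) by nra.
  nra.
- lra.
- destruct (MVT_cor2 f f' b a Hba (fun c _ => Hlim c)) as [c [Hmvt Hc]].
  specialize (Hsign c).
  assert (f' c <= 0) by nra.
  nra.
Qed.

Lemma sign_of_derivative (q0 qx r x : R) :
  0 <= q0 ->
  (x ^ 2 <= r ^ 2 -> q0 <= qx /\ Rabs x * qx <= Rabs r * q0) ->
  (r ^ 2 <= x ^ 2 -> qx <= q0) ->
  0 <= (x - r) * (q0 * (2 * x - r) - x * qx).
Proof.
intros Hq0 Hinner Houter.
assert (Hsplit : (x - r) * (q0 * (2 * x - r) - x * qx)
                 = q0 * (x - r) ^ 2 + x * (x - r) * (q0 - qx)) by ring.
assert (0 <= q0 * (x - r) ^ 2) by (apply Rmult_le_pos; [lra | apply pow2_ge_0]).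
destruct (Rle_lt_dec (r ^ 2) (x ^ 2)) as [Hout | Hin].
- specialize (Houter Hout).
  assert (Hxr : 0 <= x * (x - r)).
  { destruct (Rle_lt_dec 0 x); destruct (Rle_lt_dec 0 r); nra. }
  assert (0 <= x * (x - r) * (q0 - qx)) by (apply Rmult_le_pos; lra).
  lra.
- destruct (Hinner (Rlt_le _ _ Hin)) as [Hle Habs].
  destruct (Rle_lt_dec 0 x) as [Hx | Hx]; destruct (Rle_lt_dec 0 r) as [Hr | Hr].
  + assert (x <= r) by nra.
    assert (0 <= x * (r - x) * (qx - q0)) by (repeat apply Rmult_le_pos; lra).
    lra.
  + rewrite Rabs_pos_eq, Rabs_left in Habs by lra.
    assert (0 <= (x - r) * (2 * x * q0)) by (repeat apply Rmult_le_pos; lra).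
    nra.
  + rewrite Rabs_left, Rabs_pos_eq in Habs by lra.
    assert (0 <= (r - x) * (- 2 * x * q0)) by (apply Rmult_le_pos; nra).
    nra.
  + assert (r <= x) by nra.
    assert (0 <= - x * (x - r) * (qx - q0)) by (repeat apply Rmult_le_pos; lra).
    lra.
Qed.

Section Weight.
Variables (d : nat) (s : R).
(* The exponent (d+1+2s)/2 is nonnegative, so the weight decreases in x^2. *)
Hypothesis expo_nonneg : 0 <= expo d s.

Lemma wgt_pos (x : R) : 0 < wgt d s x.
Proof. unfold wgt, Rpower. apply exp_pos. Qed.

Lemma wgt_antitone (x y : R) : x ^ 2 <= y ^ 2 -> wgt d s y <= wgt d s x.
Proof.
intros Hxy. unfold wgt, Rpower.
assert (ln (1 + x ^ 2) <= ln (1 + y ^ 2)) by (apply ln_le; nra).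
assert (Hexp : - expo d s * ln (1 + y ^ 2) <= - expo d s * ln (1 + x ^ 2)) by nra.
destruct Hexp as [Hlt | ->]; [apply Rlt_le, exp_increasing, Hlt | lra].
Qed.

Lemma ex_RInt_wgt (a b : R) : ex_RInt (wgt d s) a b.
Proof.
apply (ex_RInt_continuous (V := R_CompleteNormedModule)); intros x _.
apply (ex_derive_continuous (K := R_AbsRing) (V := R_NormedModule)).
unfold wgt, Rpower. auto_derive. nra.
Qed.

Lemma ex_RInt_moment (a b : R) : ex_RInt (fun r => r * wgt d s r) a b.
Proof.
apply (ex_RInt_continuous (V := R_CompleteNormedModule)); intros x _.
apply (ex_derive_continuous (K := R_AbsRing) (V := R_NormedModule)).
unfold wgt, Rpower. auto_derive. nra.
Qed.

Lemma ex_RInt_wgt_scaled (rho a b : R) : ex_RInt (fun r => wgt d s (rho * r)) a b.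
Proof.
apply (ex_RInt_continuous (V := R_CompleteNormedModule)); intros x _.
apply (ex_derive_continuous (K := R_AbsRing) (V := R_NormedModule)).
unfold wgt, Rpower. auto_derive. nra.
Qed.

(* Gt_s(rho) is the mean of the weight over the segment [0, rho]. *)
Lemma Gt_s_scaled (rho : R) : Gt_s d s rho = RInt (fun r => wgt d s (rho * r)) 0 1.
Proof.
apply RInt_ext; intros r _.
unfold wgt. f_equal. ring.
Qed.

Lemma Gt_s_even (rho : R) : Gt_s d s (- rho) = Gt_s d s rho.
Proof. unfold Gt_s. replace ((- rho) ^ 2) with (rho ^ 2) by ring. reflexivity. Qed.

Lemma Gt_s_nonneg (rho : R) : 0 <= Gt_s d s rho.
Proof.
rewrite Gt_s_scaled.
apply RInt_ge_0; [lra | apply ex_RInt_wgt_scaled |].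
intros r _. apply Rlt_le, wgt_pos.
Qed.

(* A mean over a larger segment is smaller, since the weight decreases. *)
Lemma Gt_s_antitone (a b : R) : a ^ 2 <= b ^ 2 -> Gt_s d s b <= Gt_s d s a.
Proof.
intros Hab. rewrite !Gt_s_scaled.
apply RInt_le; [lra | apply ex_RInt_wgt_scaled | apply ex_RInt_wgt_scaled |].
intros r Hr. apply wgt_antitone. nra.
Qed.

(* The substitution r -> rho r turns the mean back into the integral G_s. *)
Lemma G_s_mean (rho : R) : G_s d s rho = rho * Gt_s d s rho.
Proof.
rewrite Gt_s_scaled, <- (RInt_scal (V := R_CompleteNormedModule))
  by apply ex_RInt_wgt_scaled.
transitivity (RInt (wgt d s) (rho * 0 + 0) (rho * 1 + 0)).
- unfold G_s. f_equal; ring.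
- rewrite <- RInt_comp_lin by apply ex_RInt_wgt.
  apply RInt_ext; intros r _. rewrite Rplus_0_r. reflexivity.
Qed.

Lemma G_s_increasing (a b : R) : a <= b -> G_s d s a <= G_s d s b.
Proof.
intros Hab. change (RInt (wgt d s) 0 a <= RInt (wgt d s) 0 b).
rewrite <- (RInt_Chasles (V := R_CompleteNormedModule) (wgt d s) 0 a b)
  by apply ex_RInt_wgt.
assert (0 <= RInt (wgt d s) a b).
{ apply RInt_ge_0; [lra | apply ex_RInt_wgt |]. intros r _. apply Rlt_le, wgt_pos. }
unfold plus; simpl. lra.
Qed.

(* |x| Gt_s(x) = G_s(|x|) grows with |x|. *)
Lemma abs_mul_Gt_s_monotone (a b : R) :
  a ^ 2 <= b ^ 2 -> Rabs a * Gt_s d s a <= Rabs b * Gt_s d s b.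
Proof.
intros Hab.
assert (Habs_mean : forall x, Rabs x * Gt_s d s x = G_s d s (Rabs x)).
{ intros x. rewrite G_s_mean.
  unfold Rabs; destruct (Rcase_abs x); [rewrite Gt_s_even |]; reflexivity. }
rewrite !Habs_mean. apply G_s_increasing, Rsqr_le_abs_0.
unfold Rsqr. nra.
Qed.

Lemma G_s_derive (x : R) : is_derive (G_s d s) x (wgt d s x).
Proof.
apply (is_derive_RInt (wgt d s) (G_s d s) 0 x).
- apply filter_forall; intros b.
  apply (RInt_correct (V := R_CompleteNormedModule)), ex_RInt_wgt.
- apply (ex_derive_continuous (K := R_AbsRing) (V := R_NormedModule)).
  unfold wgt, Rpower. auto_derive. nra.
Qed.

Lemma F_s_split (x : R) :
  F_s d s x = x * G_s d s x - RInt (fun r => r * wgt d s r) 0 x.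
Proof.
unfold F_s, G_s.
apply is_RInt_unique.
apply (is_RInt_ext (fun r => minus (scal x (wgt d s r)) (r * wgt d s r))).
{ intros r _. unfold minus, plus, opp, scal; simpl; unfold mult; simpl. ring. }
apply (is_RInt_minus (V := R_NormedModule)).
- apply (is_RInt_scal (V := R_NormedModule)).
  apply (RInt_correct (V := R_CompleteNormedModule)), ex_RInt_wgt.
- apply (RInt_correct (V := R_CompleteNormedModule)), ex_RInt_moment.
Qed.

Lemma F_s_derive (x : R) : is_derive (F_s d s) x (G_s d s x).
Proof.
apply (is_derive_ext (fun x => x * G_s d s x - RInt (fun r => r * wgt d s r) 0 x)).
{ intros t. symmetry. apply F_s_split. }
assert (Hprod : is_derive (fun x => x * G_s d s x) x (1 * G_s d s x + x * wgt d s x)).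
{ apply (is_derive_mult (fun x => x) (G_s d s));
    [auto_derive; reflexivity | apply G_s_derive | intros; apply Rmult_comm]. }
assert (Hmoment : is_derive (fun x => RInt (fun r => r * wgt d s r) 0 x) x (x * wgt d s x)).
{ apply (is_derive_RInt (fun r => r * wgt d s r) _ 0 x).
  - apply filter_forall; intros b.
    apply (RInt_correct (V := R_CompleteNormedModule)), ex_RInt_moment.
  - apply (ex_derive_continuous (K := R_AbsRing) (V := R_NormedModule)).
    unfold wgt, Rpower. auto_derive. nra. }
replace (G_s d s x) with (minus (1 * G_s d s x + x * wgt d s x) (x * wgt d s x))
  by (unfold minus, plus, opp; simpl; ring).
exact (is_derive_minus _ _ _ _ _ Hprod Hmoment).
Qed.

End Weight.

Theorem mainTheorem1 (d : nat) (s : R) (hd : (1 <= d)%nat) (hs0 : 0 < s) (hs1 : s < 1 / 2)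
  (r0 r1 : R) :
  (r1 ^ 2 - r1 * r0) * Gt_s d s r0 >= F_s d s r1 - F_s d s r0.
Proof.
assert (Hexpo : 0 <= expo d s) by (unfold expo; pose proof (pos_INR d); lra).
set (g := Gt_s d s r0).
set (k := fun x => g * x ^ 2 - g * r0 * x - F_s d s x).
assert (Hk : forall x, is_derive k x (g * (2 * x - r0) - x * Gt_s d s x)).
{ intros x. rewrite <- G_s_mean.
  apply (is_derive_minus (fun x => g * x ^ 2 - g * r0 * x) (F_s d s)).
  - auto_derive; [exact I | ring].
  - apply F_s_derive. }
assert (Hsign : forall x, 0 <= (x - r0) * (g * (2 * x - r0) - x * Gt_s d s x)).
{ intros x. apply sign_of_derivative.
  - apply Gt_s_nonneg.
  - intros Hx. split; [apply Gt_s_antitone | apply abs_mul_Gt_s_monotone]; assumption.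
  - apply Gt_s_antitone; assumption. }
pose proof (le_of_derivative_sign k _ r0 r1 Hk Hsign) as Hmin.
unfold k in Hmin. lra.
Qed.
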